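(* Let $\mathcal{M}=(\mathcal{S},\mathcal{A},\mathcal{P},r,p_0)$ be an infinite-horizon MDP as in the context, $D\in\mathbb{N}$, $\gamma_0,\dots,\gamma_D\in(0,1)$, and $\pi$ a stationary policy. For $d\le D$ let $V_d^\pi(s):=\mathbb{E}_\pi\big[\sum_{t=0}^\infty\Phi_d(t)r(s_t,a_t)\mid s_0=s\big]$. Then for every state $s\in\mathcal{S}$, $$V_D^\pi(s)=\mathbb{E}_{a\sim\pi(s),\,s'\sim\mathcal{P}(s,a)}\Big[r(s,a)+\sum_{d=0}^D\gamma_d\,V_d^\pi(s')\Big].$$
   Context: $\mathcal{S}\subseteq\mathbb{R}^{k}$, $\mathcal{A}\subseteq\mathbb{R}^{k'}$ finite or compact, $\mathcal{P}:\mathcal{S}\times\mathcal{A}\to\Delta(\mathcal{S})$ a transition kernel, $r:\mathcal{S}\times\mathcal{A}\to\mathbb{R}$ a continuous reward. $\mathbb{E}_\pi$ is the expectation over trajectories with $a_t\sim\pi(s_t)$, $s_{t+1}\sim\mathcal{P}(s_t,a_t)$. For $d\le D$, $$\Phi_d(t):=\sum_{\substack{(a_0,\dots,a_d)\in\mathbb{N}^{d+1}\\ a_0+\dots+a_d=t}}\ \prod_{i=0}^{d}\gamma_i^{a_i}.$$ *)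

From HB Require Import structures.
From mathcomp Require Import all_boot all_order all_algebra.
From mathcomp Require Import all_classical all_reals all_analysis.
Set Implicit Arguments. Unset Strict Implicit. Unset Printing Implicit Defensive.
Import Order.TTheory GRing.Theory Num.Theory.
Import numFieldNormedType.Exports.
Local Open Scope classical_set_scope.
Local Open Scope ring_scope.

(* Phi_d(t) = sum over (a_0,...,a_d) in N^{d+1} with a_0+...+a_d = t of
   prod_i gam_i^{a_i}.  Every such a_i is <= t, so indexing the a_i by 'I_t.+1
   enumerates exactly the same tuples. *)
Definition Phi (R : realType) (gam : nat -> R) (d t : nat) : R :=
  \sum_(a : {ffun 'I_d.+1 -> 'I_t.+1} | (\sum_(i < d.+1) (a i : nat))%N == t)
     \prod_(i < d.+1) gam i ^+ (a i : nat).

Section MDP.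
Context (R : realType) (dS dA : measure_display)
        (S : measurableType dS) (A : measurableType dA)
        (P : R.-pker (S * A)%type ~> S)
        (pi : R.-pker S ~> A)
        (r : S * A -> R).

Definition step_exp (g : A -> S -> R) (s : S) : R :=
  \int[pi s]_(a in setT) \int[P (s, a)]_(s' in setT) g a s'.

(* exp_reward t s = E_pi [ r(s_t, a_t) | s_0 = s ], computed by iterating the
   kernels: E[r(s_0,a_0)|s_0=s] = int r(s,a) pi(s)(da), and
   E[r(s_{t+1},a_{t+1})|s_0=s] = E_{a~pi(s),s'~P(s,a)} E[r(s_t,a_t)|s_0=s']. *)
Fixpoint exp_reward (t : nat) : S -> R :=
  match t with
  | 0 => fun s => \int[pi s]_(a in setT) r (s, a)
  | t'.+1 => step_exp (fun _ s' => exp_reward t' s')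
  end.

(* V_d^pi(s) = E_pi [ sum_t Phi_d(t) r(s_t,a_t) | s_0 = s ]
            = sum_t Phi_d(t) E_pi [ r(s_t,a_t) | s_0 = s ]
   (the series, taken as the limit of its partial sums). *)
Definition V (gam : nat -> R) (d : nat) (s : S) : R :=
  limn (series (fun t => Phi gam d t * exp_reward t s)).

End MDP.

(* Phi_d(t) is the t-th coefficient of G_d(x) := prod_(i <= d) 1 / (1 - gam_i x).
   From G_D - 1 = gam_D x G_D + (G_(D-1) - 1) one gets Phi_D(0) = 1 and
   Phi_D(t+1) = sum_(d <= D) gam_d Phi_d(t), while sum_t Phi_d(t) = G_d(1) is finite.
   Since E[r(s_(t+1), a_(t+1)) | s_0 = s] is one transition step applied to
   E[r(s_t, a_t) | s_0 = .], the partial sums of V_D satisfy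
   V_D^(N+1)(s) = E[r(s, a)] + sum_(d <= D) gam_d E[V_d^N(s')]; they are bounded
   uniformly in N because r is bounded, so dominated convergence lets N go to
   infinity inside the two integrals. *)

From HB Require Import structures.
From mathcomp Require Import all_boot all_order all_algebra.
From mathcomp Require Import all_classical all_reals all_analysis.
From mathcomp Require Import lra measurable_realfun.
Import Order.TTheory GRing.Theory Num.Theory.
Import numFieldNormedType.Exports.
Local Open Scope classical_set_scope.
Local Open Scope ring_scope.

Section PhiCombinatorics.
Context {R : realType} (gam : nat -> R).

Fixpoint conv_geometric (d t : nat) : R :=
  match d with
  | 0 => gam 0 ^+ t
  | d'.+1 => \sum_(j < t.+1) conv_geometric d' j * gam d ^+ (t - j)
  end.

(* Truncating each geometric series at degree [N > t] does not change the
   coefficient of [X^t] in their product. *)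
Lemma coef_prod_geometric_poly N d t : (t < N)%N ->
  (\prod_(i < d.+1) \poly_(k < N) (gam i ^+ k))`_t = conv_geometric d t.
Proof.
elim: d t => [|d IH] t tN; first by rewrite big_ord1 coef_poly tN.
rewrite big_ord_recr /= coefM; apply: eq_bigr => j _.
rewrite IH; last by apply: leq_ltn_trans tN; rewrite -ltnS.
by rewrite coef_poly (leq_ltn_trans (leq_subr _ _) tN).
Qed.

Lemma Phi_conv_geometric d t : Phi gam d t = conv_geometric d t.
Proof.
rewrite -(@coef_prod_geometric_poly t.+1 d t (ltnSn t)).
under eq_bigr do rewrite poly_def.
rewrite bigA_distr_bigA /= coef_sum /Phi [LHS]big_mkcond /=.
apply: eq_bigr => f _.
have -> : \prod_(i < d.+1) (gam i ^+ f i *: 'X^(f i))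
    = (\prod_(i < d.+1) gam i ^+ f i)%:P * 'X^(\sum_(i < d.+1) (f i : nat)).
  rewrite -prodrXr rmorph_prod -big_split /=.
  by apply: eq_bigr => i _; rewrite mul_polyC.
rewrite coefCM coefXn eq_sym.
by case: eqP => _; rewrite ?mulr1 ?mulr0.
Qed.

Lemma Phi_at0 d : Phi gam d 0 = 1.
Proof.
rewrite Phi_conv_geometric.
by elim: d => [|d IH] //=; rewrite big_ord1 IH mulr1.
Qed.

Lemma PhiSS d t : Phi gam d.+1 t.+1 = gam d.+1 * Phi gam d.+1 t + Phi gam d t.+1.
Proof.
rewrite !Phi_conv_geometric /= big_ord_recr /= subnn expr0 mulr1; congr (_ + _).
rewrite mulr_sumr; apply: eq_bigr => j _.
by rewrite subSn ?exprS 1?mulrCA // -ltnS.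
Qed.

Lemma Phi_succ D t : Phi gam D t.+1 = \sum_(0 <= d < D.+1) gam d * Phi gam d t.
Proof.
elim: D => [|D IH].
  by rewrite big_nat1 !Phi_conv_geometric /= exprS.
by rewrite big_nat_recr // -IH PhiSS addrC.
Qed.

Lemma Phi_ge0 d t : (forall i, (i <= d)%N -> 0 <= gam i) -> 0 <= Phi gam d t.
Proof.
rewrite Phi_conv_geometric.
elim: d t => [|d IH] t gam_ge0 /=; first by rewrite exprn_ge0 ?gam_ge0.
apply: sumr_ge0 => j _; rewrite mulr_ge0 ?exprn_ge0 ?IH ?gam_ge0 //.
by move=> i id; rewrite gam_ge0 // (leq_trans id).
Qed.

Lemma sum_le_contraction_fixpoint (u : nat -> R) g C : 0 <= g < 1 ->
    (forall t, 0 <= u t) -> 0 <= C ->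
    (forall N, \sum_(t < N.+1) u t <= C + g * \sum_(t < N) u t) ->
  forall N, \sum_(t < N) u t <= C / (1 - g).
Proof.
move=> /andP[g0 g1] u0 C0 uN [|N]; first by rewrite big_ord0 divr_ge0 // subr_ge0 ltW.
have le_sum : \sum_(t < N) u t <= \sum_(t < N.+1) u t by rewrite big_ord_recr lerDl.
rewrite ler_pdivlMr ?subr_gt0 //.
have := uN N; have := ler_wpM2l g0 le_sum; nra.
Qed.

Lemma Phi_partial_sums_bounded d : (forall i, (i <= d)%N -> 0 <= gam i < 1) ->
  exists C, forall N, \sum_(t < N) Phi gam d t <= C.
Proof.
elim: d => [|d IH] gam01.
  exists (1 / (1 - gam 0)); apply: sum_le_contraction_fixpoint => //.
  - exact: gam01.
  - by move=> t; apply: Phi_ge0 => i /gam01 /andP[].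
  move=> N; rewrite big_ord_recl Phi_at0 mulr_sumr lerD2l.
  by apply: ler_sum => t _; rewrite lift0 !Phi_conv_geometric /= exprS.
have [C sum_le] := IH (fun i id => gam01 i (leq_trans id (leqnSn _))).
have C0 : 0 <= C by have := sum_le 0%N; rewrite big_ord0.
exists (C / (1 - gam d.+1)); apply: sum_le_contraction_fixpoint => //.
- exact: gam01.
- by move=> t; apply: Phi_ge0 => i /gam01 /andP[].
move=> N; rewrite big_ord_recl Phi_at0.
under eq_bigr do rewrite lift0 PhiSS.
rewrite big_split /= -mulr_sumr addrCA addrC lerD2r.
by have := sum_le N.+1; rewrite big_ord_recl Phi_at0.
Qed.

End PhiCombinatorics.

Section ProbabilityIntegral.
Context {d} {T : measurableType d} {R : realType} {mu : {measure set T -> \bar R}}.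
Hypothesis mu_setT : mu setT = 1%E.
Implicit Types f g : T -> R.

Definition bounded_measurable (f : T -> R) :=
  measurable_fun setT f /\ exists M, forall x, `|f x| <= M.

Lemma bounded_measurable_integrable f :
  bounded_measurable f -> mu.-integrable setT (EFin \o f).
Proof.
move=> [mf [M f_le]]; apply: measurable_bounded_integrable => //.
  by rewrite mu_setT ltry.
exists M; split; first exact: num_real.
by move=> y My x _; apply: le_trans (f_le x) (ltW My).
Qed.

Lemma bounded_measurable_cst (c : R) : bounded_measurable (fun=> c).
Proof. by split => //; exists `|c|. Qed.

Lemma bounded_measurableD f g : bounded_measurable f -> bounded_measurable g ->
  bounded_measurable (fun x => f x + g x).
Proof.
move=> [mf [M f_le]] [mg [N g_le]]; split; first exact: measurable_funD.
by exists (M + N) => x; apply: le_trans (ler_normD _ _) (lerD (f_le x) (g_le x)).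
Qed.

Lemma bounded_measurableMl (c : R) f :
  bounded_measurable f -> bounded_measurable (fun x => c * f x).
Proof.
move=> [mf [M f_le]]; split; first exact: measurable_funM.
by exists (`|c| * M) => x; rewrite normrM ler_wpM2l.
Qed.

Lemma bounded_measurable_sum (I : eqType) (s : seq I) (F : I -> T -> R) :
    {in s, forall i, bounded_measurable (F i)} ->
  bounded_measurable (fun x => \sum_(i <- s) F i x).
Proof.
elim: s => [|i s IH] F_bm.
  by under eq_fun do rewrite big_nil; exact: bounded_measurable_cst.
under eq_fun do rewrite big_cons.
apply: bounded_measurableD; first by apply: F_bm; rewrite mem_head.
by apply: IH => j js; apply: F_bm; rewrite in_cons js orbT.
Qed.

Lemma Rintegral_cst1 (c : R) : \int[mu]_(x in setT) c = c.
Proof. by rewrite Rintegral_cst // mu_setT /= mulr1. Qed.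

Lemma normr_Rintegral_le f M : measurable_fun setT f ->
  (forall x, `|f x| <= M) -> `|\int[mu]_(x in setT) f x| <= M.
Proof.
move=> mf f_le.
have f_bm : bounded_measurable f by split => //; exists M.
apply: le_trans (le_normr_Rintegral _ _) _ => //.
  exact: bounded_measurable_integrable.
rewrite -[leRHS]Rintegral_cst1; apply: le_Rintegral => //.
- apply: bounded_measurable_integrable; split; first exact: measurableT_comp.
  by exists M => x; rewrite normr_id.
- exact/bounded_measurable_integrable/bounded_measurable_cst.
Qed.

Lemma Rintegral_sum {I : eqType} {s : seq I} {F : I -> T -> R} :
    {in s, forall i, bounded_measurable (F i)} ->
  \int[mu]_(x in setT) \sum_(i <- s) F i x = \sum_(i <- s) \int[mu]_(x in setT) F i x.
Proof.
elim: s => [|i s IH] F_bm.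
  by under eq_Rintegral do rewrite big_nil; rewrite big_nil Rintegral_cst1.
have F_bm' : {in s, forall j, bounded_measurable (F j)}.
  by move=> j js; apply: F_bm; rewrite in_cons js orbT.
under eq_Rintegral do rewrite big_cons.
rewrite RintegralD // ?IH ?big_cons //.
- by apply: bounded_measurable_integrable; apply: F_bm; rewrite mem_head.
- exact/bounded_measurable_integrable/bounded_measurable_sum.
Qed.

Lemma cvg_Rintegral_dominated (f_ : nat -> T -> R) f (C : R) :
    (forall n, measurable_fun setT (f_ n)) -> (forall n x, `|f_ n x| <= C) ->
    (forall x, f_ ^~ x @ \oo --> f x) ->
  (fun n => \int[mu]_(x in setT) f_ n x) @ \oo --> \int[mu]_(x in setT) f x.
Proof.
move=> mf_ f_le cvg_f.
have mf : measurable_fun setT f.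
  by apply: (measurable_fun_cvg mf_) => x _; exact: cvg_f.
have f_bm : bounded_measurable f.
  split => //; exists C => x.
  apply: (closed_cvg _ (@closed_le _ C) _ _ (cvg_norm (cvg_f x))).
  by apply: nearW => n; exact: f_le.
have mEf_ n : measurable_fun setT (EFin \o f_ n) by apply/measurable_EFinP.
have cvgE : \forall x \ae mu, setT x -> (EFin \o f_ n) x @[n --> \oo] --> (EFin \o f) x.
  by apply: aeW => x _; apply: cvg_comp (cvg_f x) _; exact: cvg_id.
have domE : \forall x \ae mu, forall n, setT x -> (`|(EFin \o f_ n) x| <= (cst C%:E) x)%E.
  by apply: aeW => x n _ /=; rewrite lee_fin.
have [_ _ ] := dominated_convergence measurableT mEf_ ((measurable_EFinP _ _).2 mf) cvgE
  (bounded_measurable_integrable _ (bounded_measurable_cst C)) domE.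
rewrite -(fineK (integrable_fin_num measurableT (bounded_measurable_integrable _ f_bm))).
exact: fine_cvg.
Qed.

End ProbabilityIntegral.

Section KernelIntegral.
Context {d1 d2} {X : measurableType d1} {Y : measurableType d2} {R : realType}
  (k : R.-pker X ~> Y).

(* Shifting [f] by [`|M|] makes it nonnegative, so that the measurability of
   [x |-> \int[k x] f (x, y)] follows from the nonnegative case. *)
Lemma measurable_kernel_Rintegral {f : X * Y -> R} {M : R} :
    measurable_fun setT f -> (forall z, `|f z| <= M) ->
  measurable_fun setT (fun x => \int[k x]_(y in setT) f (x, y)).
Proof.
move=> mf f_le.
have mfx x : measurable_fun setT (fun y => f (x, y)) by exact: measurable_fun_pair2.
pose g z := (f z + `|M|)%:E.
have g_ge0 z : (0 <= g z)%E.
  by move: (f_le z); rewrite /g lee_fin ler_norml => /andP[+ _]; have := ler_norm M; lra.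
have mg : measurable_fun setT g by apply/measurable_EFinP; exact: measurable_funD.
have -> : (fun x => \int[k x]_(y in setT) f (x, y)) =
    (fun x => fine (\int[k x]_y g (x, y))%E - `|M|).
  apply: funext => x.
  have -> : fine (\int[k x]_y g (x, y))%E = \int[k x]_(y in setT) (f (x, y) + `|M|) by [].
  rewrite RintegralD //.
  - by rewrite Rintegral_cst1 ?prob_kernel // addrK.
  - apply: bounded_measurable_integrable; first exact: prob_kernel.
    by split => //; exists M.
  - apply: bounded_measurable_integrable; first exact: prob_kernel.
    exact: bounded_measurable_cst.
apply: measurable_funB => //; apply: measurableT_comp => //.
exact: measurable_fun_integral_finite_kernel.
Qed.

Lemma normr_kernel_Rintegral_le {f : X * Y -> R} {M : R} x :
    measurable_fun setT f -> (forall z, `|f z| <= M) ->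
  `|\int[k x]_(y in setT) f (x, y)| <= M.
Proof.
move=> mf f_le; apply: normr_Rintegral_le; first exact: prob_kernel.
- exact: measurable_fun_pair2.
- by move=> y; exact: f_le.
Qed.

End KernelIntegral.

Section WeightedSeries.
Context {R : realType} {p e : nat -> R} {C M : R}.
Hypotheses (p_ge0 : forall t, 0 <= p t) (p_sum_le : forall N, \sum_(t < N) p t <= C)
  (e_le : forall t, `|e t| <= M).

Let sum_norm_le N : \sum_(0 <= t < N) `|p t * e t| <= C * M.
Proof.
have M_ge0 : 0 <= M by apply: le_trans (e_le 0%N).
apply: (@le_trans _ _ (\sum_(0 <= t < N) p t * M)).
  by apply: ler_sum => t _; rewrite normrM ger0_norm // ler_wpM2l.
by rewrite -mulr_suml big_mkord ler_wpM2r.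
Qed.

Lemma norm_weighted_series_le N : `|series (fun t => p t * e t) N| <= C * M.
Proof. exact: le_trans (ler_norm_sum _ _ _) (sum_norm_le N). Qed.

Lemma cvg_weighted_series : cvgn (series (fun t => p t * e t)).
Proof.
apply: normed_cvg; apply: nondecreasing_is_cvgn.
  by apply: nondecreasing_series => n _ _; exact: normr_ge0.
by exists (C * M) => _ [n _ <-]; exact: sum_norm_le.
Qed.

End WeightedSeries.

Lemma cvg_sum_seq (R : realType) (I : eqType) (s : seq I) (u : I -> nat -> R) (a : I -> R) :
    {in s, forall i, u i n @[n --> \oo] --> a i} ->
  \sum_(i <- s) u i n @[n --> \oo] --> \sum_(i <- s) a i.
Proof.
move=> cvg_u; rewrite big_seq; under eq_cvg do rewrite big_seq.
by apply: cvg_big => //; exact: add_continuous.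
Qed.

Section BoundedRewardMDP.
Context {R : realType} {dS dA : measure_display}
  {S : measurableType dS} {A : measurableType dA}
  (P : R.-pker (S * A)%type ~> S) (pi : R.-pker S ~> A) {r : S * A -> R}.
Hypothesis r_meas : measurable_fun setT r.
Context {M : R}.
Hypothesis r_le : forall z, `|r z| <= M.

Local Notation E := (exp_reward P pi r).

Lemma bounded_measurable_transition (g : S -> R) s : bounded_measurable g ->
  bounded_measurable (fun a => \int[P (s, a)]_(s' in setT) g s').
Proof.
move=> [mg [C g_le]].
have mg2 : measurable_fun setT (fun z : S * A * S => g z.2) by exact: measurableT_comp.
split; last first.
  by exists C => a; exact: (normr_kernel_Rintegral_le P (s, a) mg2 (fun z => g_le z.2)).
have mPg := measurable_kernel_Rintegral P mg2 (fun z => g_le z.2).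
exact: measurableT_comp mPg (pair1_measurable s).
Qed.

Lemma exp_reward_measurable_le t :
  measurable_fun setT (E t) /\ forall s, `|E t s| <= M.
Proof.
elim: t => [|t [mE E_le]] /=.
  split => [|s]; first exact: (measurable_kernel_Rintegral pi r_meas r_le).
  exact: (normr_kernel_Rintegral_le pi s r_meas r_le).
have mE2 : measurable_fun setT (fun z : S * A * S => E t z.2) by exact: measurableT_comp.
have E2_le (z : S * A * S) : `|E t z.2| <= M := E_le z.2.
have mPE := measurable_kernel_Rintegral P mE2 E2_le.
have PE_le z := normr_kernel_Rintegral_le P z mE2 E2_le.
split => [|s]; first exact: (measurable_kernel_Rintegral pi mPE PE_le).
exact: (normr_kernel_Rintegral_le pi s mPE PE_le).
Qed.

Lemma bounded_measurable_exp_reward t : bounded_measurable (E t).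
Proof. by have [mE E_le] := exp_reward_measurable_le t; split => //; exists M. Qed.

Lemma step_exp_sum (I : eqType) (l : seq I) (c : I -> R) (g : I -> S -> R) s :
    {in l, forall i, bounded_measurable (g i)} ->
  step_exp P pi (fun _ s' => \sum_(i <- l) c i * g i s') s =
  \sum_(i <- l) c i * step_exp P pi (fun _ s' => g i s') s.
Proof.
move=> g_bm; rewrite /step_exp.
have cg_bm : {in l, forall i, bounded_measurable (fun s' => c i * g i s')}.
  by move=> i il; exact/bounded_measurableMl/g_bm.
have int_P a i : i \in l -> (P (s, a)).-integrable setT (EFin \o g i).
  by move=> il; apply: bounded_measurable_integrable (g_bm i il); exact: prob_kernel.
under eq_Rintegral => a _.
  rewrite (Rintegral_sum (prob_kernel _) cg_bm).
  under eq_big_seq => i il do rewrite RintegralZl ?int_P //.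
  over.
rewrite (Rintegral_sum (prob_kernel _)); last first.
  by move=> i il; exact/bounded_measurableMl/bounded_measurable_transition/g_bm.
apply: eq_big_seq => i il; rewrite RintegralZl //.
apply: bounded_measurable_integrable; first exact: prob_kernel.
exact/bounded_measurable_transition/g_bm.
Qed.

Lemma step_exp_addl (W : S -> R) s : bounded_measurable W ->
  step_exp P pi (fun a s' => r (s, a) + W s') s =
  E 0 s + step_exp P pi (fun _ s' => W s') s.
Proof.
move=> W_bm; rewrite /step_exp /=.
under eq_Rintegral => a _.
  rewrite RintegralD ?Rintegral_cst1 ?prob_kernel //.
  - over.
  - exact/(bounded_measurable_integrable (prob_kernel _))/bounded_measurable_cst.
  - exact: (bounded_measurable_integrable (prob_kernel _)).
rewrite RintegralD //.
- apply: (bounded_measurable_integrable (prob_kernel _)).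
  by split; [exact: measurable_fun_pair2 | exists M => a; exact: r_le].
- exact/(bounded_measurable_integrable (prob_kernel _))/bounded_measurable_transition.
Qed.

Lemma cvg_step_exp (g_ : nat -> S -> R) (g : S -> R) (C : R) s :
    (forall n, measurable_fun setT (g_ n)) -> (forall n x, `|g_ n x| <= C) ->
    (forall x, g_ ^~ x @ \oo --> g x) ->
  step_exp P pi (fun _ s' => g_ n s') s @[n --> \oo] --> step_exp P pi (fun _ s' => g s') s.
Proof.
move=> mg_ g_le cvg_g; rewrite /step_exp.
apply: (cvg_Rintegral_dominated (prob_kernel _) _ _ C).
- move=> n; apply: (bounded_measurable_transition _ s _).1.
  by split => //; exists C.
- by move=> n a; exact: (normr_Rintegral_le (prob_kernel _) _ _ (mg_ n) (g_le n)).
- by move=> a; exact: (cvg_Rintegral_dominated (prob_kernel _) _ _ _ mg_ g_le cvg_g).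
Qed.

Variable gam : nat -> R.

Definition value_partial_sum d N s := series (fun t => Phi gam d t * E t s) N.

Lemma value_partial_sum_succ D N s :
  value_partial_sum D N.+1 s =
  E 0 s + \sum_(0 <= d < D.+1) gam d * step_exp P pi (fun _ s' => value_partial_sum d N s') s.
Proof.
rewrite /value_partial_sum /series /= big_nat_recl // Phi_at0 mul1r; congr (_ + _).
under eq_bigr do rewrite Phi_succ mulr_suml.
rewrite exchange_big /=; apply: eq_bigr => d _.
rewrite step_exp_sum; last by move=> t _; exact: bounded_measurable_exp_reward.
by rewrite mulr_sumr; apply: eq_bigr => t _; rewrite mulrA.
Qed.

Lemma measurable_value_partial_sum d N : measurable_fun setT (value_partial_sum d N).
Proof.
apply: measurable_sum => t; apply: measurable_funM => //.
exact: (exp_reward_measurable_le t).1.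
Qed.

Section Discounted.
Variable d : nat.
Hypothesis gam01 : forall i, (i <= d)%N -> 0 <= gam i < 1.

Let Phi_d_ge0 t : 0 <= Phi gam d t.
Proof. by apply: Phi_ge0 => i /gam01 /andP[]. Qed.

Lemma value_partial_sum_bounded : exists C, forall N s, `|value_partial_sum d N s| <= C.
Proof.
have [C Phi_sum_le] := Phi_partial_sums_bounded gam d gam01.
exists (C * M) => N s; apply: (norm_weighted_series_le Phi_d_ge0 Phi_sum_le) => t.
exact: (exp_reward_measurable_le t).2.
Qed.

Lemma cvg_value_partial_sum s : value_partial_sum d N s @[N --> \oo] --> V P pi r gam d s.
Proof.
have [C Phi_sum_le] := Phi_partial_sums_bounded gam d gam01.
apply: (cvg_weighted_series Phi_d_ge0 Phi_sum_le) => t.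
exact: (exp_reward_measurable_le t).2.
Qed.

Lemma bounded_measurable_value : bounded_measurable (V P pi r gam d).
Proof.
have [C partial_le] := value_partial_sum_bounded.
split.
  apply: (measurable_fun_cvg (measurable_value_partial_sum d)) => s _.
  exact: cvg_value_partial_sum.
exists C => s; apply: (closed_cvg _ (@closed_le _ C) _ _ (cvg_norm (cvg_value_partial_sum s))).
by apply: nearW => N; exact: partial_le.
Qed.

End Discounted.

Lemma value_bellman D s : (forall i, (i <= D)%N -> 0 <= gam i < 1) ->
  V P pi r gam D s =
  step_exp P pi (fun a s' => r (s, a) + \sum_(0 <= d < D.+1) gam d * V P pi r gam d s') s.
Proof.
move=> gamD01.
have gam01 d : (d < D.+1)%N -> forall i, (i <= d)%N -> 0 <= gam i < 1.
  by move=> dD i id; apply: gamD01; exact: leq_trans id _.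
have cvg_partial : value_partial_sum D N s @[N --> \oo] -->
    E 0 s + \sum_(0 <= d < D.+1) gam d * step_exp P pi (fun _ s' => V P pi r gam d s') s.
  rewrite -cvg_shiftS /=; under eq_fun do rewrite value_partial_sum_succ.
  apply: cvgD; first exact: cvg_cst.
  apply: cvg_sum_seq => d; rewrite mem_index_iota => /andP[_ /gam01 gamd01].
  have [C partial_le] := value_partial_sum_bounded d gamd01.
  apply: cvgMl_tmp; apply: (cvg_step_exp _ _ C) => //.
    exact: measurable_value_partial_sum.
  exact: cvg_value_partial_sum.
have V_bm d : d \in index_iota 0 D.+1 -> bounded_measurable (V P pi r gam d).
  by rewrite mem_index_iota => /andP[_ /gam01]; exact: bounded_measurable_value.
rewrite step_exp_addl ?step_exp_sum //; first exact: (cvg_lim _ cvg_partial).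
by apply: bounded_measurable_sum => d /V_bm /(bounded_measurableMl (gam d)).
Qed.

End BoundedRewardMDP.

Theorem proposition3 (R : realType) (dS dA : measure_display)
  (S : measurableType dS) (A : measurableType dA)
  (P : R.-pker (S * A)%type ~> S) (pi : R.-pker S ~> A)
  (r : S * A -> R) (D : nat) (gam : nat -> R)
  (r_meas : measurable_fun setT r)
  (r_bnd : exists M : R, forall x, `|r x| <= M)
  (gam01 : forall d, (d <= D)%N -> 0 < gam d < 1) :
  forall s : S,
    V P pi r gam D s =
    step_exp P pi
      (fun a s' => r (s, a) + \sum_(0 <= d < D.+1) gam d * V P pi r gam d s') s.
Proof.
move=> s; have [M r_le] := r_bnd.
by apply: (value_bellman P pi r_meas r_le) => i /gam01 /andP[/ltW -> ->].
Qed.
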